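(* Let $U$ be an infinite uniquely $2$-divisible group, $\nu$ an involutory almost regular automorphism of $U$, $G=U\rtimes\langle\nu\rangle$, and let $A$ be an infinite abelian subgroup of $U$ which is inverted by $\nu$ and maximal (with respect to inclusion) among abelian subgroups of $U$ inverted by $\nu$. For $u\in U$ let $A_u$ be the subgroup of $A$ consisting of the elements inverted by the involution $u\nu u^{-1}\in G$. Then $|A:A_u|<\infty$ for every $u\in U$.
   Context: An automorphism $\nu$ is involutory if $\nu\ne\mathrm{id}$ and $\nu^2=\mathrm{id}$, and almost regular if $C_U(\nu)$ is finite. A group is uniquely $2$-divisible if every element has a unique square root. $G$ is the semidirect product of $U$ by $\langle\nu\rangle$, with $U,\nu$ identified with their images in $G$. A subgroup is inverted by an element $t$ if $t^{-1}xt=x^{-1}$ for all its elements $x$. (Such a maximal infinite $A$ exists by Zorn's lemma and the existence of an infinite abelian subgroup inverted by $\nu$.) *)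

From Stdlib Require Import List.
Set Implicit Arguments.

Section Groups.
Variables (U : Type) (mul : U -> U -> U) (one : U) (inv : U -> U).

Definition is_group : Prop :=
  (forall x y z, mul x (mul y z) = mul (mul x y) z) /\
  (forall x, mul one x = x) /\ (forall x, mul x one = x) /\
  (forall x, mul (inv x) x = one) /\ (forall x, mul x (inv x) = one).

Definition finite_set (T : Type) (P : T -> Prop) : Prop :=
  exists s : list T, forall x, P x -> In x s.

Definition is_automorphism (nu : U -> U) : Prop :=
  (forall x y, nu (mul x y) = mul (nu x) (nu y)) /\
  (forall x y, nu x = nu y -> x = y) /\
  (forall y, exists x, nu x = y).

Definition involutory (nu : U -> U) : Prop :=
  (exists x, nu x <> x) /\ (forall x, nu (nu x) = x).

Definition almost_regular (nu : U -> U) : Prop :=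
  finite_set (fun x => nu x = x).

Definition uniquely_2_divisible : Prop :=
  forall x, exists y, mul y y = x /\ forall z, mul z z = x -> z = y.

Definition is_subgroup (S : U -> Prop) : Prop :=
  S one /\ (forall x y, S x -> S y -> S (mul x y)) /\ (forall x, S x -> S (inv x)).

Definition is_abelian (S : U -> Prop) : Prop :=
  forall x y, S x -> S y -> mul x y = mul y x.

(* Semidirect product G = U x| <nu>, nu involutory, realised on U * bool:
   (a, e) stands for a * nu^e, with (a,e)(b,f) = (a * nu^e(b), e xor f). *)
Variable nu : U -> U.

Definition nupow (e : bool) (x : U) : U := if e then nu x else x.

Definition Gmul (g h : U * bool) : U * bool :=
  (mul (fst g) (nupow (snd g) (fst h)), xorb (snd g) (snd h)).

Definition Ginv (g : U * bool) : U * bool :=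
  (nupow (snd g) (inv (fst g)), snd g).

Definition Gone : U * bool := (one, false).

Definition inU (x : U) : U * bool := (x, false).
Definition Gnu : U * bool := (one, true).

Definition inverted_by (t : U * bool) (S : U -> Prop) : Prop :=
  forall x, S x -> Gmul (Ginv t) (Gmul (inU x) t) = inU (inv x).

Definition conj_nu (u : U) : U * bool := Gmul (inU u) (Gmul Gnu (inU (inv u))).

Definition A_sub (A : U -> Prop) (u : U) : U -> Prop :=
  fun x => A x /\ Gmul (Ginv (conj_nu u)) (Gmul (inU x) (conj_nu u)) = inU (inv x).

Definition finite_index (A B : U -> Prop) : Prop :=
  exists s : list U, (forall x, In x s -> A x) /\
    forall a, A a -> exists x, In x s /\ B (mul (inv x) a).

Definition maximal_abelian_inverted (A : U -> Prop) : Prop :=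
  is_subgroup A /\ is_abelian A /\ inverted_by Gnu A /\
  forall B : U -> Prop, is_subgroup B -> is_abelian B -> inverted_by Gnu B ->
    (forall x, A x -> B x) -> forall x, B x -> A x.

End Groups.

From Stdlib Require Import List Classical.
Set Implicit Arguments.

(* The element c = u nu(u)^-1 is inverted by nu, hence so is a c^2 a for every a in A,
   and so is its square root i.  Then i^-1 a c is fixed by nu, so a |-> i^-1 a c takes
   only finitely many values.  If a and b give the same value, then b^-1 a commutes with
   i^2 = a c^2 a and with a, hence with c^2, hence with c by uniqueness of square roots;
   and an element of A commuting with c is inverted by u nu u^-1, i.e. lies in A_u. *)

Lemma finite_label_transversal (T V : Type) (A : T -> Prop) (S : V -> Prop)
    (label : T -> V -> Prop) :
  finite_set S -> (forall a, A a -> exists v, label a v /\ S v) ->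
  exists s : list T, (forall x, In x s -> A x) /\
    forall a, A a -> exists x v, In x s /\ label a v /\ label x v.
Proof.
  intros [L HL] Hlabel.
  assert (Hcover : forall L0 : list V, exists s : list T, (forall x, In x s -> A x) /\
            forall a v, A a -> label a v -> In v L0 -> exists x, In x s /\ label x v).
  { induction L0 as [|v0 L0 [s [HsA Hs]]].
    - exists nil; split; [intros x []|intros a v _ _ []].
    - destruct (classic (exists x, A x /\ label x v0)) as [[x0 [Hx0 Hl0]]|Hnone].
      + exists (x0 :: s); split.
        * intros x [<-|Hx]; auto.
        * intros a v Ha Hl [<-|Hv]; [exists x0; simpl; auto|].
          destruct (Hs a v Ha Hl Hv) as [x [Hx Hlx]]; exists x; simpl; auto.
      + exists s; split; [exact HsA|].
        intros a v Ha Hl [<-|Hv]; [exfalso; eauto|eauto]. }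
  destruct (Hcover L) as [s [HsA Hs]].
  exists s; split; [exact HsA|].
  intros a Ha; destruct (Hlabel a Ha) as [v [Hl HSv]].
  destruct (Hs a v Ha Hl (HL v HSv)) as [x [Hx Hlx]]; eauto.
Qed.

Section GroupTheory.
Variables (U : Type) (mul : U -> U -> U) (one : U) (inv : U -> U).
Hypothesis Hgroup : is_group mul one inv.

Local Infix "*" := mul.

Lemma mulgA (x y z : U) : x * y * z = x * (y * z).
Proof. destruct Hgroup as [HA _]; now rewrite HA. Qed.

Lemma mul1g (x : U) : one * x = x.
Proof. apply Hgroup. Qed.

Lemma mulg1 (x : U) : x * one = x.
Proof. apply Hgroup. Qed.

Lemma mulVg (x : U) : inv x * x = one.
Proof. apply Hgroup. Qed.

Lemma mulgV (x : U) : x * inv x = one.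
Proof. apply Hgroup. Qed.

Lemma mulKg (x y : U) : inv x * (x * y) = y.
Proof. now rewrite <- mulgA, mulVg, mul1g. Qed.

Lemma mulKVg (x y : U) : x * (inv x * y) = y.
Proof. now rewrite <- mulgA, mulgV, mul1g. Qed.

Lemma mulgI (x y z : U) : x * y = x * z -> y = z.
Proof. intros E; now rewrite <- (mulKg x y), E, mulKg. Qed.
Arguments mulgI x {y z}.

Lemma mulIg (x y z : U) : y * x = z * x -> y = z.
Proof.
  intros E; now rewrite <- (mulg1 y), <- (mulgV x), <- mulgA, E, mulgA, mulgV, mulg1.
Qed.
Arguments mulIg x {y z}.

Lemma invg_unique (x y : U) : x * y = one -> y = inv x.
Proof. intros E; apply (mulgI x); now rewrite E, mulgV. Qed.

Lemma invgK (x : U) : inv (inv x) = x.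
Proof. symmetry; apply invg_unique, mulVg. Qed.

Lemma invMg (x y : U) : inv (x * y) = inv y * inv x.
Proof. symmetry; apply invg_unique; now rewrite mulgA, mulKVg, mulgV. Qed.

Lemma invg1 : inv one = one.
Proof. symmetry; apply invg_unique, mul1g. Qed.

Ltac gsimpl :=
  repeat rewrite ?mulgA, ?mulKg, ?mulKVg, ?mulVg, ?mulgV, ?mul1g, ?mulg1,
    ?invgK, ?invMg, ?invg1.

Definition commute (x y : U) : Prop := x * y = y * x.

Lemma commuteV (x y : U) : commute x y -> commute (inv x) (inv y).
Proof. unfold commute; intros E; now rewrite <- !invMg, E. Qed.

Lemma commuteMr (x y z : U) : commute x y -> commute x z -> commute x (y * z).
Proof. unfold commute; intros Ey Ez; now rewrite <- mulgA, Ey, !mulgA, Ez. Qed.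

Lemma commute_sandwich (x a y : U) :
  commute x a -> commute x (a * y * a) -> commute x y.
Proof.
  unfold commute; intros Ea Eaya; apply (mulgI a), (mulIg a).
  transitivity (x * (a * y * a)); [now rewrite <- (mulgA a x y), <- Ea, !mulgA|].
  now rewrite Eaya, !mulgA, Ea.
Qed.

Section UniqueSquareRoots.
Hypothesis Hsqrt : uniquely_2_divisible mul.

Lemma sqrg_inj (z w : U) : z * z = w * w -> z = w.
Proof.
  intros E; destruct (Hsqrt (z * z)) as [y [_ Hy]].
  now rewrite (Hy z eq_refl), (Hy w (eq_sym E)).
Qed.

Lemma commute_of_sqr (x y : U) : commute x (y * y) -> commute x y.
Proof.
  unfold commute; intros E; apply (mulIg (inv x)).
  assert (Hsq : (x * y * inv x) * (x * y * inv x) = y * y)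
    by (rewrite !mulgA, mulKg, <- (mulgA y y), <- (mulgA x (y * y)), E; gsimpl; reflexivity).
  rewrite (sqrg_inj Hsq); gsimpl; reflexivity.
Qed.

End UniqueSquareRoots.

Section Automorphism.
Variable nu : U -> U.
Hypothesis nuM : forall x y, nu (x * y) = nu x * nu y.

Lemma morph1 : nu one = one.
Proof. apply (mulgI (nu one)); now rewrite <- nuM, !mulg1. Qed.

Lemma morphV (x : U) : nu (inv x) = inv (nu x).
Proof. apply invg_unique; now rewrite <- nuM, mulgV, morph1. Qed.

Lemma inverted_sqrt (y z : U) : uniquely_2_divisible mul ->
  nu y = inv y -> z * z = y -> nu z = inv z.
Proof.
  intros Hsqrt Hy Hz.
  assert (E : inv (nu z) = z).
  { apply (sqrg_inj Hsqrt). now rewrite <- invMg, <- nuM, Hz, Hy, invgK. }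
  now rewrite <- E at 2; rewrite invgK.
Qed.

Lemma inverted_conj_factor (u : U) : (forall x, nu (nu x) = x) ->
  nu (u * nu (inv u)) = inv (u * nu (inv u)).
Proof. intros nunu; now rewrite nuM, nunu, invMg, morphV, invgK. Qed.

Lemma inverted_by_Gnu (S : U -> Prop) :
  inverted_by mul inv nu (Gnu one) S -> forall x, S x -> nu x = inv x.
Proof.
  intros HS x Hx; specialize (HS x Hx).
  unfold Gmul, Ginv, Gnu, inU, nupow in HS; simpl in HS; injection HS as E.
  now rewrite invg1, morph1, mul1g, mulg1 in E.
Qed.

Lemma A_sub_of_commute (A : U -> Prop) (u y : U) :
  A y -> nu y = inv y -> commute y (u * nu (inv u)) -> A_sub mul one inv nu A u y.
Proof.
  intros HA Hy Hc; split; [exact HA|].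
  unfold conj_nu, Gmul, Ginv, Gnu, inU, nupow; simpl; f_equal.
  rewrite mul1g, <- nuM, Hc, mulKg; exact Hy.
Qed.

Section SquareRootLabels.
Variables (A : U -> Prop) (c : U).
Hypothesis Hsqrt : uniquely_2_divisible mul.
Hypothesis A_mul : forall x y, A x -> A y -> A (x * y).
Hypothesis A_inv : forall x, A x -> A (inv x).
Hypothesis A_abelian : is_abelian mul A.
Hypothesis nuA : forall a, A a -> nu a = inv a.
Hypothesis nuc : nu c = inv c.

Definition sqrt_label (a v : U) : Prop :=
  exists i, i * i = a * (c * c) * a /\ v = inv i * (a * c).

Lemma sqrt_label_exists (a : U) : exists v, sqrt_label a v.
Proof.
  destruct (Hsqrt (a * (c * c) * a)) as [i [Hi _]].
  exists (inv i * (a * c)), i; auto.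
Qed.

Lemma inverted_sandwich (a : U) : A a -> nu (a * (c * c) * a) = inv (a * (c * c) * a).
Proof. intros Ha; rewrite !nuM, nuc, nuA by exact Ha; gsimpl; reflexivity. Qed.

Lemma sqrt_label_fixed (a v : U) : A a -> sqrt_label a v -> nu v = v.
Proof.
  intros Ha [i [Hi ->]].
  pose proof (inverted_sqrt Hsqrt (inverted_sandwich Ha) Hi) as nui.
  rewrite !nuM, morphV, nui, nuc, (nuA Ha), invgK.
  apply (mulgI i); rewrite <- mulgA, Hi; gsimpl; reflexivity.
Qed.

Lemma sqrt_label_commute (a b v : U) : A a -> A b ->
  sqrt_label a v -> sqrt_label b v -> commute (inv b * a) c.
Proof.
  intros Ha Hb [i [Hi ->]] [j [Hj Ev]].
  set (e := inv b * a).
  assert (He : A e) by (apply A_mul; auto).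
  assert (Hij : i = e * j).
  { rewrite <- !mulgA in Ev; apply (mulIg c) in Ev.
    apply (f_equal inv) in Ev; rewrite !invMg, !invgK in Ev.
    unfold e; rewrite (A_abelian (A_inv Hb) Ha), mulgA, <- Ev, mulKVg; reflexivity. }
  pose proof (inverted_sqrt Hsqrt (inverted_sandwich Ha) Hi) as nui.
  pose proof (inverted_sqrt Hsqrt (inverted_sandwich Hb) Hj) as nuj.
  assert (Hej : commute e j).
  { rewrite <- (invgK e), <- (invgK j); apply commuteV.
    unfold commute; symmetry.
    now rewrite <- invMg, <- Hij, <- nui, Hij, nuM, nuj, (nuA He). }
  apply (commute_of_sqr Hsqrt), (commute_sandwich (a := b)).
  - apply A_abelian; auto.
  - rewrite <- Hj; apply commuteMr; exact Hej.
Qed.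

Lemma commute_transversal : finite_set (fun x => nu x = x) ->
  exists s : list U, (forall x, In x s -> A x) /\
    forall a, A a -> exists x, In x s /\ commute (inv x * a) c.
Proof.
  intros Hfin.
  destruct (finite_label_transversal A sqrt_label Hfin) as [s [HsA Hs]].
  { intros a Ha; destruct (sqrt_label_exists a) as [v Hv].
    exists v; split; [exact Hv|exact (sqrt_label_fixed Ha Hv)]. }
  exists s; split; [exact HsA|].
  intros a Ha; destruct (Hs a Ha) as [x [v [Hx [Hav Hxv]]]].
  exists x; split; [exact Hx|exact (sqrt_label_commute Ha (HsA x Hx) Hav Hxv)].
Qed.

End SquareRootLabels.
End Automorphism.
End GroupTheory.

Theorem proposition3p5 (U : Type) (mul : U -> U -> U) (one : U) (inv : U -> U)
  (nu : U -> U) (A : U -> Prop) :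
  is_group mul one inv ->
  ~ finite_set (fun _ : U => True) ->
  uniquely_2_divisible mul ->
  is_automorphism mul nu ->
  involutory nu ->
  almost_regular nu ->
  ~ finite_set A ->
  maximal_abelian_inverted mul one inv nu A ->
  forall u : U, finite_index mul inv A (A_sub mul one inv nu A u).
Proof.
  intros Hgroup _ Hsqrt [nuM _] [_ nunu] Hreg _ [[_ [A_mul A_inv]] [A_abelian [Ainv _]]] u.
  pose proof (inverted_by_Gnu Hgroup nuM Ainv) as nuA.
  set (c := mul u (nu (inv u))).
  pose proof (inverted_conj_factor Hgroup nu nuM u nunu) as nuc.
  destruct (commute_transversal Hgroup nu nuM c Hsqrt A_mul A_inv A_abelian nuA nuc Hreg)
    as [s [HsA Hs]].
  exists s; split; [exact HsA|].
  intros a Ha; destruct (Hs a Ha) as [x [Hx Hxc]].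
  exists x; split; [exact Hx|].
  assert (Hxa : A (mul (inv x) a)) by auto.
  exact (A_sub_of_commute Hgroup nu nuM A u Hxa (nuA _ Hxa) Hxc).
Qed.
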